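(* Let $D$ be a digraph and $v_0\in V(D)$ such that $d^+(v_0)\ge1$ and $d^+(v)\ge2$ for every $v\in V(D)\setminus\{v_0\}$. Then $D$ contains a subdivision of $\overleftrightarrow{K}_3-e$.
   Context: Digraphs are finite, loopless, have no parallel arcs, but may contain digons. $d^+(v)$ is the out-degree of $v$. $\overleftrightarrow{K}_3$ is the bioriented triangle (both arcs between every pair of its three vertices), and $\overleftrightarrow{K}_3-e$ is obtained from it by deleting one arc. A subdivision of a digraph $F$ is obtained by replacing each arc $(x,y)$ by a directed $x$-$y$-path, with paths for different arcs internally vertex-disjoint. *)

From mathcomp Require Import all_boot.
Set Implicit Arguments. Unset Strict Implicit. Unset Printing Implicit Defensive.

(* A digraph on a finite vertex type V is an arc relation D : rel V.
   Parallel arcs are excluded automatically; digons are allowed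
   (D x y and D y x); looplessness is an explicit hypothesis. *)
Definition loopless (V : finType) (D : rel V) : Prop := forall v, ~~ D v v.

Definition outdeg (V : finType) (D : rel V) (v : V) : nat := #|[set w | D v w]|.

(* D contains a subdivision of F: branch vertices phi (injective), and for
   each arc (u,w) of F a directed phi u - phi w path in D, given by its
   sequence of internal vertices P u w; the whole path has distinct
   vertices; internal vertices are not branch vertices, and the internal
   vertex sets of paths for distinct arcs are disjoint. *)
Definition contains_subdivision (U V : finType) (F : rel U) (D : rel V) : Prop :=
  exists (phi : U -> V) (P : U -> U -> seq V),
    [/\ injective phi,
        (forall u w, F u w ->
           path D (phi u) (rcons (P u w) (phi w)) &&
           uniq (phi u :: rcons (P u w) (phi w))),
        (forall u w x, F u w -> x \in P u w -> x \notin codom phi) &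
        (forall u w u' w', F u w -> F u' w' -> (u, w) != (u', w') ->
           [disjoint P u w & P u' w'])].

Definition K3_minus_e : rel 'I_3 :=
  fun i j => (i != j) && ~~ ((val i == 2) && (val j == 0)).

From mathcomp Require Import all_boot zify.
Set Implicit Arguments. Unset Strict Implicit. Unset Printing Implicit Defensive.

(* Induction on the number of arcs, for a digraph living on a vertex set X
   with a root e of out-degree at least 1 and all other out-degrees at least 2.
   If some vertex exceeds its bound, delete one of its arcs.  Otherwise there
   are exactly 2|X| - 1 arcs, so some vertex y has in-degree at most 1.  A
   source y is deleted; if y = e, deleting it turns its in-neighbour into the
   new root.  If y <> e has the in-neighbour x and an out-neighbour y1 <> x
   with no arc x -> y1, replace y by the arc x -> y1 and afterwards reroute the
   paths through x -> y -> y1.  Otherwise y <-> x and both see a third vertex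
   z: a z-x path avoiding y yields a subdivision of K3 - e with branch vertices
   y, x, z, and if there is none, the vertices reachable from z avoiding y span
   a smaller out-closed subdigraph satisfying the hypotheses. *)

Section Digraphs.
Variable V : finType.
Implicit Types (D : rel V) (v w x y : V).

Definition add_arc D x y : rel V := [rel a b | D a b || (a == x) && (b == y)].

Definition del_arc D x y : rel V := [rel a b | D a b && ((a != x) || (b != y))].

Definition del_vertex D y : rel V := [rel a b | [&& a != y, b != y & D a b]].

Definition restrict D (R : {set V}) : rel V := [rel a b | (a \in R) && D a b].

Definition indeg D w := #|[set v | D v w]|.

Definition narcs D := \sum_v outdeg D v.

Lemma narcs_indeg D : narcs D = \sum_w indeg D w.
Proof.
rewrite /narcs /outdeg /indeg.
under eq_bigr do rewrite -sum1dep_card big_mkcond.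
under [RHS]eq_bigr do rewrite -sum1dep_card big_mkcond.
exact: exchange_big.
Qed.

Lemma narcs_lt D D' v : (forall w, outdeg D' w <= outdeg D w) ->
  outdeg D' v < outdeg D v -> narcs D' < narcs D.
Proof.
move=> le_D'D lt_v; rewrite /narcs (bigD1 v) // [X in _ < X](bigD1 v) //= -addSn.
by apply: leq_add => //; apply: leq_sum.
Qed.

Lemma outdeg_del_arc D x y v : D x y -> outdeg D v = outdeg (del_arc D x y) v + (v == x).
Proof.
move=> Dxy; rewrite /outdeg; case: eqVneq => [->|vx].
  rewrite (cardsD1 y [set w | D x w]) inE Dxy addnC; congr (_ + _).
  by apply: eq_card => w; rewrite !inE /del_arc /= eqxx andbC.
by rewrite addn0; apply: eq_card => w; rewrite !inE /del_arc /= vx /= andbT.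
Qed.

Lemma outdeg_add_arc D x y v : ~~ D x y ->
  outdeg (add_arc D x y) v = outdeg D v + (v == x).
Proof.
move=> nDxy; rewrite /outdeg; case: eqVneq => [->|vx].
  have -> : [set w | add_arc D x y x w] = y |: [set w | D x w].
    by apply/setP => w; rewrite !inE /add_arc /= eqxx orbC.
  by rewrite cardsU1 inE nDxy addnC.
by rewrite addn0; apply: eq_card => w; rewrite !inE /add_arc /= (negPf vx) orbF.
Qed.

Lemma outdeg_del_vertex D y v : v != y -> outdeg (del_vertex D y) v = outdeg D v - D v y.
Proof.
move=> vy; rewrite /outdeg (cardsD1 y [set w | D v w]) inE addnC addnK.
by apply: eq_card => w; rewrite !inE /del_vertex /= vy.
Qed.

Lemma outdeg_del_vertex_self D y : outdeg (del_vertex D y) y = 0.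
Proof. by apply: eq_card0 => w; rewrite !inE /del_vertex /= eqxx. Qed.

Lemma outdeg_restrict D (R : {set V}) v :
  outdeg (restrict D R) v = if v \in R then outdeg D v else 0.
Proof.
by case: ifP => vR; [apply: eq_card | apply: eq_card0] => w; rewrite !inE /restrict /= vR.
Qed.

Lemma path_del_vertex D y h s t :
  path (del_vertex D y) h (rcons s t) -> y \notin h :: rcons s t.
Proof.
elim: s h => [|a s IHs] h /=.
  by rewrite !inE andbT negb_or => /and3P [hy ty _]; rewrite !(eq_sym y) hy ty.
by move=> /andP [/and3P [hy _ _] /IHs y_as]; rewrite inE negb_or y_as andbT eq_sym.
Qed.

End Digraphs.

Section Subdivisions.
Variables (U V : finType) (F : rel U).

Lemma contains_subdivision_subrel (D1 D2 : rel V) :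
  subrel D1 D2 -> contains_subdivision F D1 -> contains_subdivision F D2.
Proof.
move=> D12 [phi [P [phi_inj P_path P_int P_disj]]].
exists phi, P; split=> // u w Fuw; have /andP [pP uP] := P_path u w Fuw.
by rewrite uP andbT (sub_path D12).
Qed.

Section Detour.
Variables (x y y1 : V).

Definition detour_step (a b : V) : seq V := if (a == x) && (b == y1) then [:: y] else [::].

(* Reinserts y wherever x is immediately followed by y1, undoing the
   suppression of y in [del_vertex (add_arc D x y1) y]. *)
Fixpoint detour (h : V) (s : seq V) (t : V) : seq V :=
  if s is a :: s' then detour_step h a ++ a :: detour a s' t else detour_step h t.

Lemma path_detour (D : rel V) h s t : D x y -> D y y1 ->
  path (add_arc D x y1) h (rcons s t) -> path D h (rcons (detour h s t) t).
Proof.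
move=> Dxy Dyy1; elim: s h => [|a s IHs] h /=.
  rewrite /detour_step !andbT; case: ifP => [/andP [/eqP-> /eqP->]|hxt].
    by rewrite /= Dxy Dyy1.
  by rewrite /add_arc /= hxt orbF andbT.
rewrite /detour_step => /andP [Dha /IHs]; case: ifP => [/andP [/eqP-> /eqP->]|hxa] /=.
  by rewrite Dxy Dyy1.
by move: Dha; rewrite /add_arc /= hxa orbF => -> ->.
Qed.

Lemma mem_detour h s t z : z \in detour h s t ->
  (z \in s) || [&& z == y, x \in h :: s & y1 \in rcons s t].
Proof.
elim: s h => [|a s IHs] h /=; rewrite /detour_step.
  by case: ifP => // /andP [/eqP-> /eqP->]; rewrite !inE => ->; rewrite !eqxx.
rewrite mem_cat !inE; case: ifP => [/andP [/eqP-> /eqP->]|_].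
  by rewrite !inE => /orP [->|/orP [-> //|/IHs]]; rewrite ?eqxx ?orbT //;
     case/orP => [->|/and3P [-> _ ->]]; rewrite ?orbT.
rewrite in_nil /= => /orP [-> //|/IHs /orP [->|/and3P [-> xa y1s]]]; first by rewrite orbT.
by move: xa y1s; rewrite !inE mem_rcons => -> ->; rewrite !orbT.
Qed.

Lemma uniq_detour h s t : uniq (h :: rcons s t) -> y \notin h :: rcons s t ->
  uniq (h :: rcons (detour h s t) t).
Proof.
elim: s h => [|a s IHs] h /=; rewrite /detour_step.
  case: ifP => // /andP [/eqP-> /eqP->]; rewrite /= !inE !andbT => xy1 /norP [yx yy1].
  by rewrite negb_or eq_sym yx xy1 yy1.
move=> u_hs y_hs; have [ha hs] : h != a /\ h \notin rcons s t.
  by move: u_hs => /= /andP []; rewrite inE negb_or => /andP [].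
have {y_hs} [yh y_as] : y != h /\ y \notin a :: rcons s t.
  by move: y_hs; rewrite inE negb_or => /andP [].
have u_as : uniq (a :: rcons s t) by case/andP: u_hs.
have notin z : z \notin rcons s t -> z != y -> z \notin rcons (detour a s t) t.
  rewrite !mem_rcons !inE !negb_or => /andP [zt zs] zy; rewrite zt /=; apply/negP.
  by move=> /mem_detour; rewrite (negPf zs) (negPf zy).
have IH := IHs a u_as y_as.
have h_ad : h \notin a :: rcons (detour a s t) t by rewrite inE negb_or ha notin // eq_sym.
rewrite rcons_cat; case: ifP => [/andP [/eqP hx /eqP ay1]|_]; last by rewrite /= h_ad.
rewrite rcons_cons cat1s cons_uniq inE negb_or eq_sym yh h_ad IH andbT /=.
move: y_as; rewrite !inE mem_rcons inE !negb_or => /and3P [-> yt ys].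
rewrite mem_rcons inE negb_or yt andbT /=.
apply/negP => /mem_detour; rewrite (negPf ys) -hx inE (negPf ha) /= => /and3P [_ h_s _].
by move: hs; rewrite mem_rcons inE h_s orbT.
Qed.

End Detour.

(* As F has no isolated vertex, every branch vertex lies on a path and so
   differs from y. *)
Lemma contains_subdivision_detour (D : rel V) x y y1 :
  (forall u, exists w, F u w) -> D x y -> D y y1 ->
  contains_subdivision F (del_vertex (add_arc D x y1) y) -> contains_subdivision F D.
Proof.
move=> F_out Dxy Dyy1 [phi [P [phi_inj P_path P_int P_disj]]].
have y_path u w : F u w -> y \notin phi u :: rcons (P u w) (phi w).
  by move=> Fuw; case/andP: (P_path u w Fuw) => /path_del_vertex.
have phi_y u : phi u != y.
  by have [w /y_path] := F_out u; rewrite inE negb_or eq_sym => /andP [].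
have y_phi : y \notin codom phi by apply/codomP => -[u /esym/eqP]; rewrite (negPf (phi_y u)).
have shared u w u' w' a a' v : F u w -> F u' w' -> (u, w) != (u', w') ->
    v \in phi a :: P u w -> v \in phi a' :: P u' w' -> v = phi a /\ v = phi a'.
  move=> Fuw Fuw' neq; rewrite !inE => /predU1P [-> | vP] /predU1P [vE | vP'].
  - by rewrite vE.
  - by move: (P_int _ _ _ Fuw' vP'); rewrite codom_f.
  - by move: (P_int _ _ _ Fuw vP); rewrite vE codom_f.
  - by rewrite (disjointFr (P_disj _ _ _ _ Fuw Fuw' neq) vP) in vP'.
exists phi, (fun u w => detour x y y1 (phi u) (P u w) (phi w)); split=> //.
- move=> u w Fuw; have /andP [pP uP] := P_path u w Fuw.
  rewrite uniq_detour ?y_path ?andbT //; apply: path_detour => //.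
  by apply: sub_path pP => a b /and3P [].
- move=> u w z Fuw /mem_detour /orP [/(P_int _ _ _ Fuw) // | /and3P [/eqP-> _ _]].
  exact: y_phi.
- move=> u w u' w' Fuw Fuw' neq; rewrite disjoint_has; apply/hasPn => z.
  move=> /mem_detour /orP [zP | /and3P [/eqP zy xP y1P]]; apply/negP => /mem_detour.
    case/orP=> [zP' | /and3P [/eqP zy' _ _]].
      by rewrite (disjointFr (P_disj _ _ _ _ Fuw Fuw' neq) zP) in zP'.
    by move: (y_path _ _ Fuw); rewrite -zy' !inE mem_rcons inE zP !orbT.
  case/orP=> [zP' | /and3P [_ xP' y1P']].
    by move: (y_path _ _ Fuw'); rewrite -zy !inE mem_rcons inE zP' !orbT.
  (* Both paths use the arc x -> y1, so x and y1 are their common ends. *)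
  rewrite mem_rcons in y1P; rewrite mem_rcons in y1P'.
  have [xu xu'] := shared _ _ _ _ _ _ _ Fuw Fuw' neq xP xP'.
  have [y1w y1w'] := shared _ _ _ _ _ _ _ Fuw Fuw' neq y1P y1P'.
  by move: neq; rewrite (phi_inj u u') -?xu // (phi_inj w w') -?y1w // eqxx.
Qed.
End Subdivisions.

Lemma K3_minus_e_out (u : 'I_3) : exists w, K3_minus_e u w.
Proof.
exists (if val u == 1 then ord0 else Ordinal (isT : 1 < 3)).
by case: u => [[|[|[|?]]] ?].
Qed.

Section Triangle.
Variable V : finType.

Lemma K3_minus_e_subdivision (D : rel V) x y z s :
  D x y -> D y x -> D y z -> D x z ->
  path D z (rcons s x) -> uniq (z :: rcons s x) -> y \notin z :: rcons s x ->
  contains_subdivision K3_minus_e D.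
Proof.
move=> Dxy Dyx Dyz Dxz p_zx u_zx; rewrite !inE mem_rcons !inE !negb_or => /and3P [yz yx ys].
have /andP [zx_s u_sx] : (z \notin rcons s x) && uniq (rcons s x) by [].
have [zx zs] : z != x /\ z \notin s by move: zx_s; rewrite mem_rcons inE negb_or => /andP [].
(* Every arc of K3 - e other than 2 -> 1 is an arc of D. *)
pose phi (i : 'I_3) := nth y [:: y; x; z] i.
pose P (u w : 'I_3) := if (val u == 2) && (val w == 1) then s else [::].
exists phi, P; split.
- have u_yxz : uniq [:: y; x; z] by rewrite /= !inE !negb_or yx yz eq_sym zx.
  by move=> i j /eqP; rewrite nth_uniq // => /eqP /val_inj.
- move=> [[|[|[|?]]] ?] [[|[|[|?]]] ?] //= _; rewrite /phi /P /= ?inE ?(eq_sym x y) ?(eq_sym x z).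
  all: rewrite ?Dxy ?Dyx ?Dyz ?Dxz ?yx ?yz ?zx ?p_zx ?zx_s ?u_sx //=.
- have xs : x \notin s by move: u_sx; rewrite rcons_uniq => /andP [].
  move=> u w v _; rewrite /P; case: ifP => // _ v_s.
  by apply/codomP => -[[[|[|[|?]]] ?] //= vE]; move: v_s; rewrite vE; apply/negP.
- move=> u w u' w' _ _ neq; rewrite /P.
  case: ifP => [/andP [/eqP u2 /eqP w1]|_]; case: ifP => [/andP [/eqP u2' /eqP w1']|_].
  - by case/eqP: neq; congr pair; apply: val_inj; rewrite ?u2 ?u2' ?w1 ?w1'.
  - by rewrite disjoint_sym disjoint_has.
  - by rewrite disjoint_has.
  - by rewrite disjoint_has.
Qed.
End Triangle.

Definition outdeg2_except (V : finType) (D : rel V) (X : {set V}) (e : V) : Prop :=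
  [/\ forall a b, D a b -> (a \in X) && (b \in X), loopless D, e \in X, 0 < outdeg D e
    & forall v, v \in X -> v != e -> 1 < outdeg D v].

Section Reductions.
Variables (V : finType) (D : rel V) (X : {set V}) (e : V).
Hypotheses (D_X : forall a b, D a b -> (a \in X) && (b \in X)) (D_loopless : loopless D).
Hypotheses (eX : e \in X) (De : 0 < outdeg D e).
Hypothesis Dv : forall v, v \in X -> v != e -> 1 < outdeg D v.
Hypothesis IH : forall (D' : rel V) X' e', narcs D' < narcs D -> outdeg2_except D' X' e' ->
  contains_subdivision K3_minus_e D'.

Lemma arc_neq a b : D a b -> a != b.
Proof. by move=> Dab; apply: contraTneq Dab => ->; apply: D_loopless. Qed.

Lemma outdeg_gt0 v : v \in X -> 0 < outdeg D v.
Proof. by move=> vX; case: (eqVneq v e) => [-> //|ve]; apply: ltnW (Dv vX ve). Qed.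

Lemma reduce_slack v : v \in X -> (if v == e then 1 else 2) < outdeg D v ->
  contains_subdivision K3_minus_e D.
Proof.
move=> vX slack; have /card_gt0P [w] := leq_ltn_trans (leq0n _) slack; rewrite inE => Dvw.
apply: (contains_subdivision_subrel (D1 := del_arc D v w)) => [a b /andP [] //|].
have deg a : outdeg D a = outdeg (del_arc D v w) a + (a == v) := outdeg_del_arc a Dvw.
apply: (IH (X' := X) (e' := e)).
  by apply: (narcs_lt (v := v)) => [a|]; rewrite deg ?eqxx ?addn1 ?leq_addr.
split=> //.
- by move=> a b /andP [/D_X].
- by move=> a; rewrite /del_arc /= (negPf (D_loopless a)).
- by move: (deg e) slack De; case: (eqVneq e v) => [<-|_]; rewrite ?eqxx; lia.
- move=> a aX ae; move: (deg a) (Dv aX ae) slack.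
  by case: (eqVneq a v) => [<-|_]; rewrite ?(negPf ae); lia.
Qed.

Lemma reduce_closed (R : {set V}) r u : R \subset X ->
  (forall v w, v \in R -> D v w -> w \in R) -> r \in R -> u \in X -> u \notin R ->
  contains_subdivision K3_minus_e D.
Proof.
move=> RX R_closed rR uX uR.
apply: (contains_subdivision_subrel (D1 := restrict D R)) => [a b /andP [] //|].
pose e' := if e \in R then e else r.
have e'R : e' \in R by rewrite /e'; case: ifP.
apply: (IH (X' := R) (e' := e')).
  apply: (narcs_lt (v := u)) => [w|]; rewrite !outdeg_restrict ?(negPf uR) ?outdeg_gt0 //.
  by case: ifP.
split=> //.
- by move=> a b /andP [aR /(R_closed _ _ aR) ->]; rewrite aR.
- by move=> a; rewrite /restrict /= (negPf (D_loopless a)) andbF.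
- by rewrite outdeg_restrict e'R outdeg_gt0 // (subsetP RX).
- move=> v vR ve'; rewrite outdeg_restrict vR Dv ?(subsetP RX) //.
  by apply: contraNneq ve' => ve; rewrite /e' -ve vR.
Qed.

Lemma reduce_source y : y \in X -> (forall v, ~~ D v y) -> contains_subdivision K3_minus_e D.
Proof.
move=> yX no_in; have /card_gt0P [w] := outdeg_gt0 yX; rewrite inE => Dyw.
apply: (reduce_closed (R := X :\ y) (r := w) (u := y)); rewrite ?setD11 ?subD1set //.
- move=> v w' /setD1P [_ vX] Dvw'; rewrite !inE; case/andP: (D_X Dvw') => _ ->.
  by rewrite andbT; apply: contraTneq Dvw' => ->; apply: no_in.
- by rewrite !inE eq_sym arc_neq //; case/andP: (D_X Dyw).
Qed.

Lemma reduce_root x : D x e -> (forall v, D v e -> v = x) -> contains_subdivision K3_minus_e D.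
Proof.
move=> Dxe in_e; have xe := arc_neq Dxe; have /andP [xX _] := D_X Dxe.
apply: (contains_subdivision_subrel (D1 := del_vertex D e)) => [a b /and3P [] //|].
have deg v : v != e -> v != x -> outdeg (del_vertex D e) v = outdeg D v.
  move=> ve vx; have nDve : ~~ D v e by apply: contra vx => /in_e ->.
  by rewrite outdeg_del_vertex // (negPf nDve) subn0.
apply: (IH (X' := X :\ e) (e' := x)).
  apply: (narcs_lt (v := e)) => [v|]; last by rewrite outdeg_del_vertex_self.
  case: (eqVneq v e) => [->|ve]; first by rewrite outdeg_del_vertex_self.
  by rewrite outdeg_del_vertex // leq_subr.
split.
- by move=> a b /and3P [ae be /D_X /andP [aX bX]]; rewrite !inE ae be aX bX.
- by move=> a; rewrite /del_vertex /= (negPf (D_loopless a)) !andbF.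
- by rewrite !inE xe xX.
- by rewrite outdeg_del_vertex // Dxe; have := Dv xX xe; lia.
- by move=> v /setD1P [ve vX] vx; rewrite deg // Dv.
Qed.

Lemma reduce_bypass x y y1 : y != e -> D x y -> (forall v, D v y -> v = x) ->
  D y y1 -> y1 != x -> ~~ D x y1 -> contains_subdivision K3_minus_e D.
Proof.
move=> ye Dxy in_y Dyy1 y1x nDxy1.
have [xy yy1] := (arc_neq Dxy, arc_neq Dyy1).
have [/andP [xX yX] /andP [_ y1X]] := (D_X Dxy, D_X Dyy1).
apply: (contains_subdivision_detour K3_minus_e_out Dxy Dyy1).
have deg v : v != y -> outdeg (del_vertex (add_arc D x y1) y) v = outdeg D v.
  move=> vy; rewrite outdeg_del_vertex // outdeg_add_arc // /add_arc /= (negPf yy1) andbF orbF.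
  case: eqVneq => [->|vx]; first by rewrite Dxy addnK.
  have nDvy : ~~ D v y by apply: contra vx => /in_y ->.
  by rewrite (negPf nDvy) !addn0 subn0.
apply: (IH (X' := X :\ y) (e' := e)).
  apply: (narcs_lt (v := y)) => [v|]; last by rewrite outdeg_del_vertex_self outdeg_gt0.
  by case: (eqVneq v y) => [->|vy]; rewrite ?outdeg_del_vertex_self ?deg.
split.
- move=> a b /and3P [ay b_y Dab]; rewrite !inE ay b_y /=.
  by case/orP: Dab => [/D_X // | /andP [/eqP-> /eqP->]]; rewrite xX y1X.
- move=> a; rewrite /del_vertex /add_arc /= (negPf (D_loopless a)) /=.
  by apply/negP => /and3P [_ _ /andP [/eqP-> /eqP ax]]; rewrite ax eqxx in y1x.
- by rewrite !inE eq_sym ye eX.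
- by rewrite deg 1?eq_sym.
- by move=> v /setD1P [vy vX] ve; rewrite deg // Dv.
Qed.

Section Tight.
Hypothesis tight : forall v, v \in X -> outdeg D v <= (if v == e then 1 else 2).

(* There are 2|X| - 1 arcs, too few for in-degree 2 everywhere. *)
Lemma exists_indeg_le1 : exists2 y, y \in X & indeg D y <= 1.
Proof.
case: (pickP (fun y => (y \in X) && (indeg D y <= 1))) => [y /andP [] | big_in].
  by exists y.
have in2 w : w \in X -> 1 < indeg D w by move=> wX; move: (big_in w); rewrite wX /= ltnNge => ->.
have outside_X (F : V -> nat) :
    (forall v, v \notin X -> F v = 0) -> \sum_v F v = \sum_(v in X) F v.
  by move=> F0; rewrite (bigID (mem X)) /= [X in _ + X]big1 ?addn0.
have := narcs_indeg D; rewrite /narcs !outside_X => [sums_eq|v vX|w wX].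
- suff : \sum_(v in X) outdeg D v < \sum_(v in X) indeg D v by rewrite sums_eq ltnn.
  rewrite (bigD1 e eX) [X in _ < X](bigD1 e eX) /= -addSn.
  apply: leq_add; first by have := tight eX; have := in2 e eX; rewrite eqxx; lia.
  apply: leq_sum => v /andP [vX ve]; apply: leq_trans (in2 v vX).
  by have := tight vX; rewrite (negPf ve).
- by apply: eq_card0 => w; rewrite !inE; apply: contraNF vX => /D_X /andP [].
- by apply: eq_card0 => v; rewrite !inE; apply: contraNF wX => /D_X /andP [].
Qed.

Lemma no_bypass_triangle x y : y \in X -> y != e -> D x y ->
  (forall w, D y w -> w != x -> D x w) -> D y x /\ exists2 z, D y z & D x z /\ z != x.
Proof.
move=> yX ye Dxy no_bypass; have /andP [xX _] := D_X Dxy.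
set Ny := [set w | D y w]; set Nx := [set w | D x w].
have Ny_sub : Ny :\ x \subset Nx :\ y.
  apply/subsetP => w; rewrite !inE => /andP [wx Dyw].
  by rewrite no_bypass // eq_sym arc_neq.
have Nx_y : #|Nx :\ y| <= 1.
  have := tight xX; have := cardsD1 y Nx; rewrite inE Dxy /outdeg -/Nx.
  by case: (x == e); lia.
have := Dv yX ye; have := cardsD1 x Ny; have := subset_leq_card Ny_sub.
rewrite /outdeg -/Ny inE; case: (D y x); [move=> _ Ny_x Ny2; split=> // | lia].
have /card_gt0P [z] : 0 < #|Ny :\ x| by lia.
by rewrite !inE => /andP [zx Dyz]; exists z => //; rewrite no_bypass.
Qed.

Lemma reduce_unique_in x y : y \in X -> y != e -> D x y -> (forall v, D v y -> v = x) ->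
  contains_subdivision K3_minus_e D.
Proof.
move=> yX ye Dxy in_y.
case: (pickP (fun y1 => [&& D y y1, y1 != x & ~~ D x y1])) => [y1 /and3P [] | no_bypass].
  exact: reduce_bypass.
have in_Nx w : D y w -> w != x -> D x w.
  by move=> Dyw wx; move: (no_bypass w); rewrite Dyw wx => /negbFE.
have [Dyx [z Dyz [Dxz zx]]] := no_bypass_triangle yX ye Dxy in_Nx.
pose E := del_vertex D y.
case: (boolP (connect E z x)) => [/connectP [p pE xl] | nzx].
  move: xl; case/shortenP: pE => q qE uq _.
  case/lastP: q qE uq => [|s t] qE uq; rewrite ?last_rcons => xl; first by rewrite xl eqxx in zx.
  subst t; apply: (K3_minus_e_subdivision Dxy Dyx Dyz Dxz _ uq (path_del_vertex qE)).
  by apply: sub_path qE => a b /and3P [].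
(* Only x enters y, so what z reaches in D - y is out-closed in D. *)
have [/andP [xX _] /andP [_ zX]] := (D_X Dxy, D_X Dyz).
apply: (reduce_closed (R := [set w in X :\ y | connect E z w]) (r := z) (u := x)) => //.
- by apply/subsetP => w; rewrite !inE => /andP [/andP [_ ->]].
- move=> v w; rewrite !inE => /andP [/andP [vy vX] zv] Dvw.
  have wy : w != y.
    apply: contraNneq nzx => wy; have vx : v = x by apply: in_y; rewrite -wy.
    by rewrite -vx.
  have /andP [_ ->] := D_X Dvw; rewrite wy; apply: connect_trans zv (connect1 _).
  by rewrite /E /del_vertex /= vy wy.
- by rewrite !inE eq_sym arc_neq // zX connect0.
- by rewrite !inE (negPf nzx) andbF.
Qed.

End Tight.

Lemma outdeg2_except_step : contains_subdivision K3_minus_e D.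
Proof.
case: (pickP (fun v => (v \in X) && ((if v == e then 1 else 2) < outdeg D v))) =>
  [v /andP [vX slack] | no_slack]; first exact: reduce_slack slack.
have tight v : v \in X -> outdeg D v <= (if v == e then 1 else 2).
  by move=> vX; move: (no_slack v); rewrite vX /= => /negbT; rewrite -leqNgt.
have [y yX indeg_y] := exists_indeg_le1 tight.
case: (pickP (fun x => D x y)) => [x Dxy | no_in]; last first.
  by apply: (reduce_source yX) => v; rewrite no_in.
have in_y v : D v y -> v = x by move=> Dvy; apply: (card_le1_eqP indeg_y); rewrite inE.
case: (eqVneq y e) => [ye | ye]; last exact: (reduce_unique_in tight yX ye Dxy in_y).
by move: Dxy in_y; rewrite ye; apply: reduce_root.
Qed.

End Reductions.

Lemma outdeg2_except_subdivision (V : finType) (D : rel V) (X : {set V}) (e : V) :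
  outdeg2_except D X e -> contains_subdivision K3_minus_e D.
Proof.
have [n] := ubnP (narcs D); elim: n => // n IHn in D X e *; rewrite ltnS => Dn [].
move=> D_X D_loopless eX De Dv; apply: (outdeg2_except_step D_X D_loopless eX De Dv).
by move=> D' X' e' D'D; apply: IHn; apply: leq_trans D'D Dn.
Qed.

Theorem proposition4p1 (V : finType) (D : rel V) (v0 : V) :
  loopless D ->
  1 <= outdeg D v0 ->
  (forall v, v != v0 -> 2 <= outdeg D v) ->
  contains_subdivision K3_minus_e D.
Proof.
move=> D_loopless Dv0 Dv; apply: (outdeg2_except_subdivision (X := [set: V]) (e := v0)).
by split=> // [a b _ | v _ /Dv]; rewrite ?inE.
Qed.
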